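(* Let $k,n,j\in\mathbb N_0$ and $Y\in\mathcal H^d_n$. If $j\ge k$, then for every $\xi\in\mathbb S^{d-1}$, $$\Delta^k\big[(1-\|x\|^2)^jY(x)\big]\Big|_{x=\xi}=4^k(-j)_k(-k)_{j-k}\frac{(n+\frac d2)_k}{(n+\frac d2)_{j-k}}\,Y(\xi),$$ and if $j<k$ the left-hand side is $0$.
   Context: $\mathcal H^d_n$ is the space of homogeneous harmonic polynomials of degree $n$ in $d$ variables, $\mathbb S^{d-1}$ the unit sphere, $\Delta$ the Laplacian in $\mathbb R^d$, and $(a)_0=1$, $(a)_m=a(a+1)\cdots(a+m-1)$ for $m\in\mathbb N$. *)

From mathcomp Require Import all_boot all_order all_algebra.
From mathcomp Require Import mpoly.
Set Implicit Arguments. Unset Strict Implicit. Unset Printing Implicit Defensive.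
Import Order.TTheory GRing.Theory Num.Theory.
Local Open Scope ring_scope.

Definition poch {R : ringType} (a : R) (m : nat) : R :=
  \prod_(i < m) (a + i%:R).

Definition laplacian {R : ringType} {d : nat} (p : {mpoly R[d]}) : {mpoly R[d]} :=
  \sum_(i < d) mderiv i (mderiv i p).

Definition normsq {R : ringType} {d : nat} : {mpoly R[d]} :=
  \sum_(i < d) 'X_i ^+ 2.

Definition harmonic_homog {R : ringType} (d n : nat) (Y : {mpoly R[d]}) : Prop :=
  Y \is n.-homog /\ laplacian Y = 0.

Definition on_sphere {R : ringType} {d : nat} (xi : 'I_d -> R) : Prop :=
  \sum_(i < d) xi i ^+ 2 = 1.

From HB Require Import structures.
From mathcomp Require Import all_boot all_order all_algebra.
From mathcomp Require Import mpoly.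
From mathcomp Require Import ring zify.
Set Implicit Arguments. Unset Strict Implicit. Unset Printing Implicit Defensive.
Import Order.TTheory GRing.Theory Num.Theory.
Local Open Scope ring_scope.

(* With [u = 1 - |x|^2] and the Euler operator [E = sum_i x_i d_i], the
   product rule gives [Delta (u p) = u Delta p - 2d p - 4 E p] and
   [E (u p) = u E p - 2 |x|^2 p].  For [Y] harmonic and [n]-homogeneous,
   [E Y = n Y], so [G_j = u^j Y] satisfies the three-term recurrence
   [Delta G_(j+1) = 4 (j+1) (j G_(j-1) - (n + d/2 + j) G_j)].  As [u]
   vanishes on the sphere, [Delta^k G_j = c_(k,j) Y] there, where [c] obeys
   the same recurrence with [c_(0,j) = [j = 0]]; the Pochhammer expression
   solves that recurrence. *)

Lemma iter_raddfB (V : zmodType) (f : {additive V -> V}) k :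
  {morph iter k f : x y / x - y}.
Proof. by move=> x y; elim: k => //= k ->; rewrite raddfB. Qed.

Lemma iter_raddfMn (V : zmodType) (f : {additive V -> V}) k x m :
  iter k f (x *+ m) = iter k f x *+ m.
Proof. by elim: k => //= k ->; rewrite raddfMn. Qed.

Lemma iter_raddf0 (V : zmodType) (f : {additive V -> V}) k : iter k f 0 = 0.
Proof. by have := iter_raddfB f k 0 0; rewrite !subrr. Qed.

Section Laplacian.
Variables (R : comNzRingType) (d : nat).
Local Notation P := {mpoly R[d]}.
Implicit Types (p : P) (i : 'I_d).

Lemma laplacianB : {morph @laplacian R d : p q / p - q}.
Proof.
by move=> p q; rewrite /laplacian -sumrB; apply: eq_bigr => i _; rewrite !raddfB.
Qed.

HB.instance Definition _ := GRing.isZmodMorphism.Build _ _ (@laplacian R d) laplacianB.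

Lemma mderivXU i (l : 'I_d) : mderiv i ('X_l : P) = (l == i)%:R.
Proof.
rewrite mderivX mnm1E; case: eqP => [->|_]; last by rewrite scale0r.
have -> : (U_(i) - U_(i) = 0)%MM by apply/mnmP => t; rewrite !mnmE subnn.
by rewrite mpolyX0 scale1r.
Qed.

Lemma mderiv_normsq i : mderiv i (normsq : P) = 'X_i *+ 2.
Proof.
rewrite /normsq raddf_sum (bigD1 i) //= big1 => [|l /negbTE nli].
  by rewrite expr2 mderivM mderivXU eqxx mul1r mulr1 addr0 mulr2n.
by rewrite expr2 mderivM mderivXU nli mul0r mulr0 addr0.
Qed.

Definition onem_normsq : P := 1 - normsq.

Lemma mderiv_onem_normsq i : mderiv i onem_normsq = - ('X_i *+ 2).
Proof. by rewrite /onem_normsq mderivB mderiv_normsq -mpolyC1 mderivC sub0r. Qed.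

Definition euler p : P := \sum_i 'X_i * mderiv i p.

Lemma laplacian_onem_normsqM p :
  laplacian (onem_normsq * p) =
  onem_normsq * laplacian p - (p *+ (2 * d) + euler p *+ 4).
Proof.
rewrite /laplacian /euler mulr_sumr.
have -> : \sum_i mderiv i (mderiv i (onem_normsq * p)) =
    \sum_i (onem_normsq * mderiv i (mderiv i p) - (p *+ 2 + ('X_i * mderiv i p) *+ 4)).
  apply: eq_bigr => i _; rewrite mderivM mderiv_onem_normsq mderivD !mderivM.
  by rewrite mderiv_onem_normsq mderivN mderivMn mderivXU eqxx /=; ring.
by rewrite sumrB big_split /= -!sumrMnl sumr_const card_ord -mulrnA.
Qed.

Lemma euler_onem_normsqM p :
  euler (onem_normsq * p) = onem_normsq * euler p + ((onem_normsq - 1) *+ 2) * p.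
Proof.
rewrite /euler mulr_sumr.
have -> : \sum_i 'X_i * mderiv i (onem_normsq * p) =
    \sum_i (onem_normsq * ('X_i * mderiv i p) - ('X_i ^+ 2 *+ 2) * p).
  by apply: eq_bigr => i _; rewrite mderivM mderiv_onem_normsq; ring.
by rewrite sumrB -mulr_suml sumrMnl -/normsq /onem_normsq; ring.
Qed.

Lemma euler_homog n p : p \is n.-homog -> euler p = p *+ n.
Proof.
move=> /dhomogP homp; rewrite /euler {1 2}(mpolyE p).
under eq_bigr => i _ do rewrite raddf_sum mulr_sumr.
rewrite exchange_big /= -sumrMnl big_seq [RHS]big_seq; apply: eq_bigr => m pm.
under eq_bigr => i _ do rewrite mderivZ -scalerAr.
rewrite -scaler_sumr scalerMnr; congr (_ *: _).
rewrite -(homp m pm) /= mdegE -sumrMnr; apply: eq_bigr => i _.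
rewrite mderivX -scalerAr -mulr_natl.
have [->|mi_neq0] := eqVneq (m i) 0%N; first by rewrite !mul0r mulr0n scale0r.
by rewrite -mpolyXD addmC submK ?lep1mP // mulr1 scaler_nat.
Qed.

Lemma meval_normsq (xi : 'I_d -> R) : on_sphere xi -> normsq.@[xi] = 1.
Proof.
rewrite /on_sphere => <-; rewrite rmorph_sum; apply: eq_bigr => i _.
by rewrite rmorphXn /= mevalXU.
Qed.

Section HarmonicTimesPower.
Variables (n : nat) (Y : P).
Hypothesis Y_harm : harmonic_homog n Y.

Definition powY j : P := onem_normsq ^+ j * Y.

Lemma powYS j : powY j.+1 = onem_normsq * powY j.
Proof. by rewrite /powY exprS mulrA. Qed.

Lemma euler_powY j : euler (powY j) = powY j *+ (n + 2 * j) - powY j.-1 *+ (2 * j).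
Proof.
elim: j => [|[|j] IH].
- by rewrite /powY mul1r (euler_homog Y_harm.1) addn0 mulr0n subr0.
- by rewrite powYS euler_onem_normsqM IH /=; ring.
- by rewrite powYS euler_onem_normsqM IH /= !powYS; ring.
Qed.

Lemma laplacian_powY0 : laplacian (powY 0) = 0.
Proof. by rewrite /powY mul1r Y_harm.2. Qed.

Lemma laplacian_powYS j :
  laplacian (powY j.+1) =
  powY j.-1 *+ (4 * j.+1 * j) - powY j *+ (j.+1 * (4 * j + 4 * n + 2 * d)).
Proof.
elim: j => [|[|j] IH]; rewrite powYS laplacian_onem_normsqM euler_powY.
- by rewrite laplacian_powY0 /=; ring.
- by rewrite IH /= !powYS; ring.
- by rewrite IH /= !powYS; ring.
Qed.

Lemma meval_powY (xi : 'I_d -> R) j :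
  on_sphere xi -> (powY j).@[xi] = (j == 0)%:R * Y.@[xi].
Proof.
move=> xi_sph; rewrite mevalM rmorphXn /= mevalB meval1 meval_normsq // subrr.
by rewrite expr0n.
Qed.

End HarmonicTimesPower.
End Laplacian.

Section Pochhammer.
Variable R : ringType.
Implicit Type a : R.

Lemma poch0 a : poch a 0 = 1.
Proof. by rewrite /poch big_ord0. Qed.

Lemma pochS a m : poch a m.+1 = poch a m * (a + m%:R).
Proof. by rewrite /poch big_ord_recr. Qed.

Lemma pochSl a m : poch a m.+1 = a * poch (a + 1) m.
Proof.
rewrite /poch big_ord_recl /= addr0; congr (_ * _).
by apply: eq_bigr => i _; rewrite /bump leq0n natrD addrA.
Qed.

End Pochhammer.

Lemma poch_oppSl (R : ringType) (N m : nat) :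
  poch (- N.+1%:R : R) m.+1 = - N.+1%:R * poch (- N%:R) m.
Proof. by rewrite pochSl -(natr1 N) opprD addrNK. Qed.

Lemma poch_opp_shift (R : comNzRingType) (N m : nat) :
  N.+1%:R * poch (- N%:R : R) m = poch (- N.+1%:R) m * (N.+1%:R - m%:R).
Proof.
have := poch_oppSl R N m; rewrite pochS => shift.
by rewrite -[LHS]opprK -mulNr -shift; ring.
Qed.

Lemma poch_neq0 (R : idomainType) (a : R) m :
  (forall i, a + i%:R != 0) -> poch a m != 0.
Proof. by move=> a_nonpole; rewrite /poch prodf_seq_neq0; apply/allP => i _ /=. Qed.

Section LaplacianCoefficients.
Variables (R : numFieldType) (c : R).

Fixpoint lapcoef k j : R :=
  match k, j with
  | 0, _ => (j == 0)%:R
  | k.+1, 0 => 0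
  | k.+1, j.+1 => 4 * j.+1%:R * (j%:R * lapcoef k j.-1 - (c + j%:R) * lapcoef k j)
  end.

Definition lapcoef_closed k j : R :=
  if (k <= j)%N then
    4 ^+ k * poch (- j%:R) k * poch (- k%:R) (j - k) * (poch c k / poch c (j - k))
  else 0.

Lemma lapcoef_closed_addn k p :
  lapcoef_closed k (k + p) =
  4 ^+ k * poch (- (k + p)%:R) k * poch (- k%:R) p * (poch c k / poch c p).
Proof. by rewrite /lapcoef_closed leq_addr addKn. Qed.

Lemma lapcoef_closed_diag k :
  lapcoef_closed k k = 4 ^+ k * poch (- k%:R) k * poch c k.
Proof. by rewrite /lapcoef_closed leqnn subnn !poch0 divr1 mulr1. Qed.

Lemma lapcoef_closed_gt k j : (j < k)%N -> lapcoef_closed k j = 0.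
Proof. by rewrite /lapcoef_closed ltnNge => /negbTE ->. Qed.

Hypothesis c_nonpole : forall m, c + m%:R != 0.

Lemma lapcoef_closedSS k j :
  lapcoef_closed k.+1 j.+1 =
  4 * j.+1%:R * (j%:R * lapcoef_closed k j.-1 - (c + j%:R) * lapcoef_closed k j).
Proof.
have [jk|] := ltnP j k.
  have jk' : (j.-1 < k)%N := leq_ltn_trans (leq_pred j) jk.
  by rewrite !lapcoef_closed_gt // !mulr0 subrr mulr0.
rewrite leq_eqVlt => /orP[/eqP <-|].
  have kterm : k%:R * lapcoef_closed k k.-1 = 0.
    by case: k => [|k]; rewrite ?mul0r // lapcoef_closed_gt ?mulr0.
  rewrite kterm !lapcoef_closed_diag pochSl -(natr1 k) opprD addrNK pochS exprS.
  ring.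
move=> kj; have [q ->] : exists q, j = (k + q.+1)%N by exists (j - k.+1)%N; lia.
rewrite (lapcoef_closed_addn k.+1 q.+1) (lapcoef_closed_addn k q.+1).
rewrite [in X in lapcoef_closed _ X.-1]addnS /= lapcoef_closed_addn addSn !addnS.
set N := (k + q)%N.
(* Express everything through [poch (-(N+1)) k], [poch (-k) q], [poch c k]
   and [poch c q], after which the identity is rational in [c], [k], [q]. *)
have poch_N : poch (- N%:R : R) k = poch (- N.+1%:R) k * q.+1%:R / N.+1%:R.
  have -> : q.+1%:R = N.+1%:R - k%:R :> R.
    by rewrite -natrB /N -addnS ?addKn // leq_addr.
  by rewrite -poch_opp_shift mulrC mulKf // pnatr_eq0.
rewrite poch_N !poch_oppSl !pochS exprS -!natr1 /N natrD; field.
by rewrite c_nonpole poch_neq0 // -natrD natr1 pnatr_eq0.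
Qed.

Lemma lapcoefE k j : lapcoef k j = lapcoef_closed k j.
Proof.
elim: k j => [|k IH] [|j].
- by rewrite lapcoef_closed_diag !poch0 !mulr1.
- by rewrite (lapcoef_closed_addn 0 j.+1) pochSl oppr0 !(mul0r, mulr0).
- by rewrite lapcoef_closed_gt.
- by rewrite /= !IH lapcoef_closedSS.
Qed.

End LaplacianCoefficients.

Lemma iter_laplacian_powY (R : numFieldType) (d n : nat) (Y : {mpoly R[d]})
    (Y_harm : harmonic_homog n Y) (xi : 'I_d -> R) (xi_sph : on_sphere xi) k j :
  (iter k laplacian (powY Y j)).@[xi] = lapcoef (n%:R + d%:R / 2) k j * Y.@[xi].
Proof.
elim: k j => [|k IH] j; first exact: meval_powY.
rewrite iterSr; case: j => [|j].
  by rewrite (laplacian_powY0 Y_harm) iter_raddf0 meval0 mul0r.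
rewrite (laplacian_powYS Y_harm) iter_raddfB !iter_raddfMn mevalB !mevalMn !IH /=.
rewrite -(mulr_natr _ (4 * _ * _)) -(mulr_natr _ (_ * (_ + _ + _))) !(natrM, natrD).
by field.
Qed.

Theorem lemma3p5 (R : realFieldType) (d k n j : nat) (Y : {mpoly R[d]})
  (hY : @harmonic_homog R d n Y) (xi : 'I_d -> R) (hxi : on_sphere xi) :
  (iter k laplacian ((1 - normsq) ^+ j * Y)).@[xi] =
  (if (k <= j)%N then
     4 ^+ k * poch (- (j%:R)) k * poch (- (k%:R)) (j - k)
       * (poch (n%:R + d%:R / 2) k / poch (n%:R + d%:R / 2) (j - k)) * Y.@[xi]
   else 0).
Proof.
have d_gt0 : (0 < d)%N.
  by case: d xi hxi {Y hY} => // xi; rewrite /on_sphere big_ord0 => /esym/eqP; rewrite oner_eq0.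
have c_nonpole m : n%:R + d%:R / 2 + m%:R != 0 :> R.
  by rewrite gt_eqF // ltr_wpDr // ltr_wpDl // divr_gt0 // ltr0n.
rewrite (iter_laplacian_powY hY hxi) lapcoefE // /lapcoef_closed.
by case: ifP; rewrite ?mul0r.
Qed.
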